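(* Let $R$ be a ring and $G$ a group such that the group ring $RG$ is a DT ring, and suppose $2\notin\Delta(R)$ and $3\notin\Delta(R)$. Then $G$ is an elementary abelian $2$-group, i.e. $g^2=1$ for all $g\in G$.
   Context: All rings are associative with identity; $U(R)$ is the group of units. $\Delta(R)=\{x\in R: x+u\in U(R)\text{ for all }u\in U(R)\}$. $\mathrm{Tr}(R)=\{x\in R: x^3=x\}$. A ring $R$ is a DT ring if every $r\in R$ can be written $r=e+d$ with $e\in\mathrm{Tr}(R)$ and $d\in\Delta(R)$. $RG$ denotes the group ring. *)

From HB Require Import structures.
From mathcomp Require Import all_boot all_order all_algebra.
From mathcomp Require Import finmap.

Set Implicit Arguments.
Unset Strict Implicit.
Unset Printing Implicit Defensive.

Import GRing.Theory.
Local Open Scope fset_scope.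

Section RingNotions.
Variables (T : Type) (add mul : T -> T -> T) (one : T).

Definition is_unit (x : T) : Prop :=
  exists y, mul x y = one /\ mul y x = one.

Definition in_Delta (x : T) : Prop :=
  forall u, is_unit u -> is_unit (add x u).

Definition in_Tr (x : T) : Prop := mul x (mul x x) = x.

Definition is_DT : Prop :=
  forall r, exists e d, in_Tr e /\ in_Delta d /\ r = add e d.
End RingNotions.

Definition Delta_ring (R : nzRingType) (x : R) : Prop :=
  in_Delta (@GRing.add R) (@GRing.mul R) 1%R x.

Section GroupRing.
Variables (R : nzRingType) (G : groupType).

Definition grpring := {fsfun G -> R with 0%R}.

Definition gr_one : grpring :=
  [fsfun g in [fset (1%g : G)] => (1%R : R) | 0%R].

Definition gr_add (a b : grpring) : grpring :=
  [fsfun g in (finsupp a `|` finsupp b) => (a g + b g)%R | 0%R].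

Definition gr_mul (a b : grpring) : grpring :=
  [fsfun g in [fset (x * y)%g | x in finsupp a, y in finsupp b] =>
     (\sum_(x <- finsupp a) a x * b (x^-1 * g)%g)%R | 0%R].

Definition grpring_is_DT : Prop := is_DT gr_add gr_mul gr_one.
End GroupRing.

(* In a DT ring the tripotent part [e] of [2 = e + d] gives [6 = 11 d - 6 d^2 + d^3],
   so [6] lies in Delta; and for a unit [u = e + d] the tripotent [e] is a unit with
   [e^2 = 1], so [u^2 - 1] lies in Delta.  In [RG] this makes [h - 1] lie in Delta
   for [h = g^2], hence also every [h^j - 1].  If [h] has infinite order, the
   inverse of [2 - h = 1 - (h - 1)] has coefficient [- 2^j] at [h^-(j+1)], and its
   finite support makes [2] nilpotent, so [2] lies in Delta(R).  If [h] has finite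
   order [n], induct on [n]: a power [k] of order 2 gives [(2 - k)(2 + k) = 3], so
   [3] is a unit of [R] and [2 = 6 / 3] lies in Delta(R); a power of order 3 gives
   [(1 + k (k - 1))(1 + k) = 2], so [2] is a unit and [3] lies in Delta(R); and for
   [n] coprime to [6] the unit [\sum_i h^i] annihilates [h - 1]. *)

From HB Require Import structures.
From mathcomp Require Import all_boot all_order all_algebra.
From mathcomp Require Import finmap ring.
From Stdlib Require Import Classical_Prop.

Set Implicit Arguments.
Unset Strict Implicit.
Unset Printing Implicit Defensive.

Import GRing.Theory.
Local Open Scope fset_scope.
Local Open Scope ring_scope.

Local Notation rg_unit x := (is_unit *%R 1 x).

Section DeltaTheory.
Variable T : nzRingType.
Implicit Types x y u v d : T.

Lemma rg_unit1 : rg_unit (1 : T). Proof. by exists 1; rewrite mulr1. Qed.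

Lemma rg_unitM x y : rg_unit x -> rg_unit y -> rg_unit (x * y).
Proof.
move=> [x' [xx' x'x]] [y' [yy' y'y]]; exists (y' * x'); split.
  by rewrite -mulrA (mulrA y) yy' mul1r xx'.
by rewrite -mulrA (mulrA x') x'x mul1r y'y.
Qed.

Lemma rg_unitN x : rg_unit x -> rg_unit (- x).
Proof. by move=> [x' [xx' x'x]]; exists (- x'); rewrite !mulrNN xx' x'x. Qed.

Lemma rg_unit_nat n y : y * n%:R = 1 -> rg_unit (n%:R : T).
Proof. by move=> yn; exists y; split=> //; rewrite -(commr_nat y n). Qed.

Lemma Delta0 : Delta_ring (0 : T). Proof. by move=> u Uu; rewrite add0r. Qed.

Lemma DeltaD x y : Delta_ring x -> Delta_ring y -> Delta_ring (x + y).
Proof. by move=> Dx Dy u Uu; rewrite -addrA; apply/Dx/Dy. Qed.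

Lemma DeltaN x : Delta_ring x -> Delta_ring (- x).
Proof. by move=> Dx u /rg_unitN/Dx/rg_unitN; rewrite opprD opprK. Qed.

Lemma DeltaB x y : Delta_ring x -> Delta_ring y -> Delta_ring (x - y).
Proof. by move=> Dx /DeltaN; apply: DeltaD. Qed.

Lemma DeltaMn x n : Delta_ring x -> Delta_ring (x *+ n).
Proof.
move=> Dx; elim: n => [|n IHn]; first by rewrite mulr0n; apply: Delta0.
by rewrite mulrS; apply: DeltaD.
Qed.

Lemma Delta_sum (I : Type) (r : seq I) (F : I -> T) :
  (forall i, Delta_ring (F i)) -> Delta_ring (\sum_(i <- r) F i).
Proof.
move=> DF; elim: r => [|i r IHr]; first by rewrite big_nil; apply: Delta0.
by rewrite big_cons; apply: DeltaD.
Qed.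

Lemma rg_unitDl u d : rg_unit u -> Delta_ring d -> rg_unit (u + d).
Proof. by move=> Uu /(_ u Uu); rewrite addrC. Qed.

Lemma rg_unit1D d : Delta_ring d -> rg_unit (1 + d).
Proof. by move=> Dd; apply: rg_unitDl rg_unit1 Dd. Qed.

Lemma rg_unit1B d : Delta_ring d -> rg_unit (1 - d).
Proof. by move/DeltaN; apply: rg_unit1D. Qed.

Lemma Delta_unitMl u d : rg_unit u -> Delta_ring d -> Delta_ring (u * d).
Proof.
move=> [u' [uu' u'u]] Dd w Uw.
have -> : u * d + w = u * (d + u' * w) by rewrite mulrDr mulrA uu' mul1r.
apply: rg_unitM; first by exists u'.
by apply/Dd/rg_unitM => //; exists u.
Qed.

Lemma Delta_unitMr u d : rg_unit u -> Delta_ring d -> Delta_ring (d * u).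
Proof.
move=> [u' [uu' u'u]] Dd w Uw.
have -> : d * u + w = (d + w * u') * u by rewrite mulrDl -mulrA u'u mulr1.
apply: rg_unitM; last by exists u'.
by apply/Dd/rg_unitM => //; exists u.
Qed.

Lemma Delta_unitMKl u d : rg_unit u -> Delta_ring (u * d) -> Delta_ring d.
Proof.
move=> [u' [uu' u'u]] /(Delta_unitMl (ex_intro _ u (conj u'u uu'))).
by rewrite mulrA u'u mul1r.
Qed.

Lemma DeltaM x y : Delta_ring x -> Delta_ring y -> Delta_ring (x * y).
Proof.
move=> Dx Dy u [v [uv vu]].
have Dvx : Delta_ring (v * x) by apply: Delta_unitMl => //; exists u.
have -> : x * y + u = u * ((v * x) * (1 + y) + (1 - v * x)).
  rewrite mulrDr mulrBr mulr1 !mulrA uv mul1r mulrDr mulr1.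
  by rewrite [RHS]addrC addrA subrK addrC.
apply: rg_unitM; first by exists v.
exact: (Delta_unitMr (rg_unit1D Dy) Dvx (rg_unit1B Dvx)).
Qed.

Lemma nilpotent_rg_unit1D x n : x ^+ n = 0 -> rg_unit (1 + x).
Proof.
move=> xn0; pose s := \sum_(i < n) (- x) ^+ i.
have es : (- x - 1) * s = - 1 by rewrite -subrX1 exprNn xn0 mulr0 sub0r.
have cs : GRing.comm (- x - 1) s.
  apply: commr_sum => i _; apply/commrX/commr_sym.
  by apply: commrB; [apply: commr_refl | apply: commr1].
have -> : 1 + x = - (- x - 1) by rewrite opprB opprK addrC.
exists s; rewrite mulNr es opprK; split=> //.
by rewrite mulrN -cs es opprK.
Qed.

Lemma nilpotent2_Delta n : (2%:R : T) ^+ n = 0 -> Delta_ring (2%:R : T).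
Proof.
move=> two_n u [v [uv vu]].
have -> : 2%:R + u = u * (1 + v *+ 2) by rewrite mulrDr mulr1 mulrnAr uv addrC.
apply: rg_unitM; first by exists v.
by apply: (@nilpotent_rg_unit1D _ n); rewrite exprMn_n -mulr_natr natrX two_n mulr0.
Qed.

Lemma Delta_natMKl m n : rg_unit (m%:R : T) -> Delta_ring ((m * n)%:R : T) ->
  Delta_ring (n%:R : T).
Proof. by rewrite natrM; apply: Delta_unitMKl. Qed.

Lemma coprime6_rg_unit n d : Delta_ring (6%:R : T) -> coprime n 6 ->
  Delta_ring d -> rg_unit (n%:R + d).
Proof.
move=> D6 co6 Dd; have D6q m : Delta_ring ((6 * m)%:R : T).
  by rewrite natrM mulr_natr; apply: DeltaMn.
rewrite -coprime_modl in co6; rewrite (divn_eq n 6) mulnC; set q := (n %/ 6)%N.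
case: (n %% 6)%N (ltn_pmod n (isT : 0 < 6)%N) co6 => [|[|[|[|[|[|r]]]]]] //= _ _.
  by rewrite natrD addrAC addrC; apply: rg_unit1D (DeltaD (D6q _) Dd).
have -> : (6 * q + 5)%:R = (6 * q.+1)%:R - 1 :> T.
  by apply/eqP; rewrite eq_sym subr_eq -mulrSr mulnS addnC -addnS.
by rewrite addrAC addrC; apply: rg_unitDl (rg_unitN rg_unit1) (DeltaD (D6q _) Dd).
Qed.

Lemma commr_intr x : commr_rmorph (intr : int -> T) x.
Proof. by move=> a; apply/commrMz/commr1. Qed.

(* Evaluation at [x] of polynomials over [int]: [x] commutes with the integers, so
   identities in [int[X]], proved by [ring], specialize to any ring. *)
Local Notation eval_int x := (horner_morph (commr_intr x)).

Lemma tripotent_6 e : e * (e * e) = e ->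
  6%:R = (2%:R - e) *+ 11 - ((2%:R - e) * (2%:R - e)) *+ 6
         + (2%:R - e) * ((2%:R - e) * (2%:R - e)) :> T.
Proof.
move=> e3; have := congr1 (eval_int e) (_ : 6%:R = (2%:R - 'X) *+ 11
  - ((2%:R - 'X) * (2%:R - 'X)) *+ 6 + (2%:R - 'X) * ((2%:R - 'X) * (2%:R - 'X))
  + ('X * ('X * 'X) - 'X)).
rewrite !(rmorph_nat, rmorphB, rmorphD, rmorphM, rmorphMn) /= horner_morphX.
by rewrite e3 subrr addr0; apply; ring.
Qed.

Lemma sqr_factor x : (1 - (x - 1)) * (2%:R + x) = 3%:R + (1 - x * x).
Proof.
have := congr1 (eval_int x) (_ : (1 - ('X - 1)) * (2%:R + 'X) = 3%:R + (1 - 'X * 'X)).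
by rewrite !(rmorph_nat, rmorph1, rmorphB, rmorphD, rmorphM) /= horner_morphX; apply; ring.
Qed.

Lemma cube_factor x : (1 + x * (x - 1)) * (1 + x) = 2%:R + (x * (x * x) - 1).
Proof.
have := congr1 (eval_int x)
  (_ : (1 + 'X * ('X - 1)) * (1 + 'X) = 2%:R + ('X * ('X * 'X) - 1)).
by rewrite !(rmorph_nat, rmorph1, rmorphB, rmorphD, rmorphM) /= horner_morphX; apply; ring.
Qed.

Lemma Delta6_of_tripotent e d : e * (e * e) = e -> Delta_ring d -> 2%:R = e + d ->
  Delta_ring (6%:R : T).
Proof.
move=> e3 Dd two_ed; have de : 2%:R - e = d by rewrite two_ed addrAC subrr add0r.
rewrite (tripotent_6 e3) de.
have Dd2 := DeltaM Dd Dd.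
exact: DeltaD (DeltaB (DeltaMn _ Dd) (DeltaMn _ Dd2)) (DeltaM Dd Dd2).
Qed.

Lemma tripotent_unit_sqr u e d : rg_unit u -> e * (e * e) = e -> Delta_ring d ->
  u = e + d -> Delta_ring (u * u - 1).
Proof.
move=> Uu e3 Dd u_ed.
have [v [ev ve]] : rg_unit e by have := DeltaN Dd Uu; rewrite u_ed addrC addrK.
have ee : e * e = 1 by rewrite -[e * e]mul1r -ve -mulrA e3 ve.
have -> : u * u - 1 = e * d + d * e + d * d.
  by rewrite u_ed mulrDl !mulrDr ee [_ - 1]addrC addrA addKr addrA.
by apply/DeltaD/DeltaM => //; apply: DeltaD;
  [apply: Delta_unitMl | apply: Delta_unitMr] => //; exists v.
Qed.

Lemma DT_Delta6 : is_DT +%R *%R (1 : T) -> Delta_ring (6%:R : T).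
Proof.
by move=> DT; have [e [d [e3 [Dd two_ed]]]] := DT 2%:R; apply: Delta6_of_tripotent two_ed.
Qed.

Lemma DT_unit_sqr u : is_DT +%R *%R (1 : T) -> rg_unit u -> Delta_ring (u * u - 1).
Proof.
by move=> DT Uu; have [e [d [e3 [Dd u_ed]]]] := DT u; apply: tripotent_unit_sqr u_ed.
Qed.

End DeltaTheory.

Section GroupRingStructure.
Variables (R : nzRingType) (G : groupType).
Local Notation S := (grpring R G).
Implicit Types (a b c : S) (g x y : G).

Lemma gr_addE a b g : gr_add a b g = a g + b g.
Proof.
rewrite /gr_add fsfunE inE; case: ifP => // /norP[ag bg].
by rewrite !fsfun_dflt // addr0.
Qed.

Lemma gr_oneE g : gr_one R G g = (g == 1%g)%:R.
Proof. by rewrite /gr_one fsfunE inE; case: (g == 1%g). Qed.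

Lemma big_fset_eq1 (A : {fset G}) (F : G -> R) y :
  \sum_(x <- A) (if x == y then F x else 0) = if y \in A then F y else 0.
Proof.
case: ifP => yA; last first.
  by rewrite big1_fset // => x xA _; case: eqP => // xy; rewrite -xy xA in yA.
rewrite (big_fsetD1 y) //= eqxx big1_fset ?addr0 // => x.
by rewrite !inE => /andP[/negPf ->].
Qed.

Lemma gr_mulE a b g :
  gr_mul a b g = \sum_(x <- finsupp a) a x * b (x^-1 * g)%g.
Proof.
rewrite /gr_mul fsfunE; case: ifP => // g_im.
rewrite big1_fset // => x xa _; case: (finsuppP b (x^-1 * g)%g) => [|xg_b].
  by rewrite mulr0.
by move: g_im; rewrite -{1}(mulVKg x g) in_imfset2.
Qed.

(* Both expansions of the product are the double sum of [a x * b y] over [x * y = g]. *)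
Lemma gr_mulEr a b g :
  gr_mul a b g = \sum_(y <- finsupp b) a (g * y^-1)%g * b y.
Proof.
pose F x y := if (x * y)%g == g then a x * b y else 0.
have Fr x y : F x y = if y == (x^-1 * g)%g then a x * b y else 0.
  by rewrite /F -(inj_eq (mulgI (x^-1)%g)) mulKg.
have Fl x y : F x y = if x == (g * y^-1)%g then a x * b y else 0.
  by rewrite /F -(inj_eq (mulIg (y^-1)%g)) mulgK.
transitivity (\sum_(x <- finsupp a) \sum_(y <- finsupp b) F x y).
  rewrite gr_mulE; apply: eq_bigr => x _; under eq_bigr do rewrite Fr.
  by rewrite big_fset_eq1; case: finsuppP => // _; rewrite mulr0.
rewrite exchange_big; apply: eq_bigr => y _; under eq_bigr do rewrite Fl.
by rewrite big_fset_eq1; case: finsuppP => // _; rewrite mul0r.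
Qed.

Definition gr_zero : S := [fsfun for fun _ : G => 0 : R].
Definition gr_opp a : S := [fsfun g in finsupp a => - a g | 0].

Lemma gr_zeroE g : gr_zero g = 0.
Proof. by rewrite /gr_zero fsfunE. Qed.

Lemma gr_oppE a g : gr_opp a g = - a g.
Proof. by rewrite /gr_opp fsfunE; case: finsuppP; rewrite ?oppr0. Qed.

Lemma gr_addA : associative (@gr_add R G).
Proof. by move=> a b c; apply/fsfunP => g; rewrite !gr_addE addrA. Qed.

Lemma gr_addC : commutative (@gr_add R G).
Proof. by move=> a b; apply/fsfunP => g; rewrite !gr_addE addrC. Qed.

Lemma gr_add0 : left_id gr_zero (@gr_add R G).
Proof. by move=> a; apply/fsfunP => g; rewrite gr_addE gr_zeroE add0r. Qed.

Lemma gr_addN : left_inverse gr_zero gr_opp (@gr_add R G).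
Proof. by move=> a; apply/fsfunP => g; rewrite gr_addE gr_zeroE gr_oppE addNr. Qed.

Lemma finsupp_gr_one : finsupp (gr_one R G) = [fset 1%g].
Proof.
apply/fsetP => x; rewrite mem_finsupp gr_oneE inE.
by case: (x == 1%g); rewrite ?oner_neq0 ?eqxx.
Qed.

Lemma gr_mulA : associative (@gr_mul R G).
Proof.
move=> a b c; apply/fsfunP => g; symmetry; rewrite [LHS]gr_mulEr [RHS]gr_mulE.
under eq_bigr do rewrite gr_mulE mulr_suml.
rewrite exchange_big; apply: eq_bigr => x _.
by rewrite gr_mulEr mulr_sumr; apply: eq_bigr => y _; rewrite mulrA mulgA.
Qed.

Lemma gr_mul1 : left_id (gr_one R G) (@gr_mul R G).
Proof.
move=> a; apply/fsfunP => g.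
by rewrite gr_mulE finsupp_gr_one big_seq_fset1 gr_oneE eqxx mul1r invg1 mul1g.
Qed.

Lemma gr_mulr1 : right_id (gr_one R G) (@gr_mul R G).
Proof.
move=> a; apply/fsfunP => g.
by rewrite gr_mulEr finsupp_gr_one big_seq_fset1 gr_oneE eqxx mulr1 invg1 mulg1.
Qed.

Lemma gr_mulDl : left_distributive (@gr_mul R G) (@gr_add R G).
Proof.
move=> a b c; apply/fsfunP => g; rewrite gr_addE !gr_mulEr -big_split.
by apply: eq_bigr => y _; rewrite gr_addE mulrDl.
Qed.

Lemma gr_mulDr : right_distributive (@gr_mul R G) (@gr_add R G).
Proof.
move=> a b c; apply/fsfunP => g; rewrite gr_addE !gr_mulE -big_split.
by apply: eq_bigr => x _; rewrite gr_addE mulrDr.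
Qed.

Lemma gr_one_neq0 : gr_one R G != gr_zero.
Proof.
apply/eqP => /(congr1 (fun a : S => a 1%g)).
by rewrite gr_oneE eqxx gr_zeroE; apply/eqP/oner_neq0.
Qed.

HB.instance Definition _ := Choice.on S.
HB.instance Definition _ :=
  GRing.isZmodule.Build S gr_addA gr_addC gr_add0 gr_addN.
HB.instance Definition _ := GRing.Zmodule_isNzRing.Build S
  gr_mulA gr_mul1 gr_mulr1 gr_mulDl gr_mulDr gr_one_neq0.

End GroupRingStructure.

Section GroupRingElements.
Variables (R : nzRingType) (G : groupType).
Local Notation S := (grpring R G).
Implicit Types (a b z : S) (g k l : G) (r : R).

Definition gr_elt k : S := [fsfun g in [fset k] => 1 | 0].
Definition gr_const r : S := [fsfun g in [fset 1%g] => r | 0].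

Lemma gr_eltE k g : gr_elt k g = (g == k)%:R.
Proof. by rewrite /gr_elt fsfunE inE; case: (g == k). Qed.

Lemma gr_constE r g : gr_const r g = if g == 1%g then r else 0.
Proof. by rewrite /gr_const fsfunE inE. Qed.

Lemma gr_coefD a b g : (a + b) g = a g + b g.
Proof. exact: gr_addE. Qed.

Lemma gr_coefB a b g : (a - b) g = a g - b g.
Proof. by rewrite gr_coefD; congr (_ + _); apply: gr_oppE. Qed.

Lemma gr_coef1 g : (1 : S) g = (g == 1%g)%:R.
Proof. exact: gr_oneE. Qed.

Lemma finsupp_sub1 a k : (forall g, g != k -> a g = 0) -> finsupp a `<=` [fset k].
Proof.
move=> a0; apply/fsubsetP => g; rewrite mem_finsupp inE.
by apply: contraR => /a0 ->.
Qed.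

Lemma gr_mulE_supp1 a b k g :
  finsupp a `<=` [fset k] -> (a * b) g = a k * b (k^-1 * g)%g.
Proof.
move=> ak; rewrite /GRing.mul /= gr_mulE (big_fset_incl _ ak) ?big_seq_fset1 //.
by move=> x _ /fsfun_dflt ->; rewrite mul0r.
Qed.

Lemma gr_mulEr_supp1 a b k g :
  finsupp b `<=` [fset k] -> (a * b) g = a (g * k^-1)%g * b k.
Proof.
move=> bk; rewrite /GRing.mul /= gr_mulEr (big_fset_incl _ bk) ?big_seq_fset1 //.
by move=> x _ /fsfun_dflt ->; rewrite mulr0.
Qed.

Lemma finsupp_gr_elt k : finsupp (gr_elt k) `<=` [fset k].
Proof. by apply: finsupp_sub1 => g; rewrite gr_eltE => /negPf ->. Qed.

Lemma finsupp_gr_const r : finsupp (gr_const r) `<=` [fset 1%g].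
Proof. by apply: finsupp_sub1 => g; rewrite gr_constE => /negPf ->. Qed.

Lemma gr_coef_eltM k z g : (gr_elt k * z) g = z (k^-1 * g)%g.
Proof. by rewrite (gr_mulE_supp1 _ _ (finsupp_gr_elt k)) gr_eltE eqxx mul1r. Qed.

Lemma gr_coef_constM r z g : (gr_const r * z) g = r * z g.
Proof.
by rewrite (gr_mulE_supp1 _ _ (finsupp_gr_const r)) gr_constE eqxx invg1 mul1g.
Qed.

Lemma gr_coef_mulconst r z g : (z * gr_const r) g = z g * r.
Proof.
by rewrite (gr_mulEr_supp1 _ _ (finsupp_gr_const r)) gr_constE eqxx invg1 mulg1.
Qed.

Lemma gr_eltM k l : gr_elt k * gr_elt l = gr_elt (k * l)%g.
Proof.
apply/fsfunP => g; rewrite gr_coef_eltM !gr_eltE.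
by rewrite -(inj_eq (mulgI k)) mulVKg.
Qed.

Lemma gr_elt1 : gr_elt 1%g = 1. Proof. by []. Qed.

Lemma rg_unit_gr_elt k : rg_unit (gr_elt k).
Proof. by exists (gr_elt (k^-1)%g); rewrite !gr_eltM mulgV mulVg gr_elt1. Qed.

Lemma gr_constD r1 r2 : gr_const (r1 + r2) = gr_const r1 + gr_const r2.
Proof. by apply/fsfunP => g; rewrite gr_coefD !gr_constE; case: eqP; rewrite ?addr0. Qed.

Lemma gr_constM r1 r2 : gr_const (r1 * r2) = gr_const r1 * gr_const r2.
Proof.
by apply/fsfunP => g; rewrite gr_coef_constM !gr_constE; case: eqP; rewrite ?mulr0.
Qed.

Lemma gr_const1 : gr_const 1 = 1.
Proof. by []. Qed.

Lemma gr_const_nat n : gr_const n%:R = n%:R.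
Proof.
elim: n => [|n IHn]; last by rewrite !mulrS gr_constD IHn.
by apply/fsfunP => g; rewrite gr_constE gr_zeroE; case: eqP.
Qed.

Lemma gr_coef_nat n g : (n%:R : S) g = if g == 1%g then n%:R else 0.
Proof. by rewrite -gr_const_nat gr_constE. Qed.

Lemma Delta_gr_const r : Delta_ring (gr_const r) -> Delta_ring r.
Proof.
move=> Dr w [w' [ww' w'w]].
have Uw : rg_unit (gr_const w : S).
  by exists (gr_const w'); rewrite -!gr_constM ww' w'w gr_const1.
have [z [rwz zrw]] := Dr _ Uw; rewrite -gr_constD in rwz zrw.
exists (z 1%g); split.
  by have := congr1 (fun a : S => a 1%g) rwz; rewrite gr_coef_constM gr_coef1 eqxx.
by have := congr1 (fun a : S => a 1%g) zrw; rewrite gr_coef_mulconst gr_coef1 eqxx.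
Qed.

End GroupRingElements.

Arguments gr_elt {R G}.
Arguments gr_const {R G}.
Arguments rg_unit_gr_elt {R G}.

Lemma exists_notin_fset (T : choiceType) (f : nat -> T) (A : {fset T}) :
  injective f -> exists2 n, (0 < n)%N & f n \notin A.
Proof.
move=> f_inj; pose s := iota 1 #|` A|.+1.
have [/hasP[n + fnA]|/hasPn s_in] := boolP (has (fun n => f n \notin A) s).
  by rewrite mem_iota => /andP[n_gt0 _]; exists n.
have /uniq_leq_size : {subset map f s <= A}.
  by move=> _ /mapP[n sn ->]; apply/negPn/s_in.
by rewrite map_inj_uniq ?iota_uniq // size_map size_iota ltnn => /(_ isT).
Qed.

Lemma expg_inj (G : groupType) (x : G) :
  (forall n, (0 < n)%N -> (x ^+ n)%g != 1%g) -> injective (fun n => (x ^+ n)%g).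
Proof.
move=> x_aper i j; wlog le_ij : i j / (i <= j)%N => [wlog_ij|] xij.
  by case: (leqP i j) => [|/ltnW] le; [apply: wlog_ij | symmetry; apply: wlog_ij].
have : (x ^+ i * x ^+ (j - i) = x ^+ i * 1)%g by rewrite -expgnDr subnKC // mulg1.
move/mulgI; case: (posnP (j - i)) => [|ji_gt0].
  by move/eqP; rewrite subn_eq0 => le_ji _; apply/eqP; rewrite eqn_leq le_ij.
by move/eqP; rewrite (negPf (x_aper _ ji_gt0)).
Qed.

Section TorsionUnits.
Variables (R : nzRingType) (G : groupType).
Local Notation S := (grpring R G).
Local Notation elt := (@gr_elt R G).
Implicit Types (z : S) (h k : G).

Hypothesis D6 : Delta_ring (6%:R : S).

Lemma gr_elt_inj : injective elt.
Proof.
move=> k l /(congr1 (fun a : S => a k)); rewrite !gr_eltE eqxx eq_sym.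
by case: eqP => // _ /eqP; rewrite mulr0n oner_eq0.
Qed.

Lemma Delta6_coef : Delta_ring (6%:R : R).
Proof. by apply: (@Delta_gr_const _ G); rewrite gr_const_nat. Qed.

Lemma Delta_elt_expg h : Delta_ring (elt h - 1) ->
  forall j, Delta_ring (elt (h ^+ j)%g - 1).
Proof.
move=> Dh; elim=> [|j IHj]; first by rewrite expg0 gr_elt1 subrr; apply: Delta0.
have -> : elt (h ^+ j.+1)%g - 1 = elt h * (elt (h ^+ j)%g - 1) + (elt h - 1).
  by rewrite expgS -gr_eltM mulrBr mulr1 addrA subrK.
exact: DeltaD (Delta_unitMl (rg_unit_gr_elt h) IHj) Dh.
Qed.

Lemma rg_unit_nat_of_coef k (a p : S) m : rg_unit a -> a * p = m%:R -> p k = 1 ->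
  rg_unit (m%:R : R).
Proof.
move=> [z [az za]] apm pk1; apply: (@rg_unit_nat _ _ (z k)).
have := congr1 (fun b : S => (z * b) k) apm.
by rewrite mulrA za mul1r pk1 -gr_const_nat gr_coef_mulconst.
Qed.

Lemma involution_trivial k : ~ Delta_ring (2%:R : R) -> (k * k = 1)%g ->
  Delta_ring (elt k - 1) -> k = 1%g.
Proof.
move=> nD2 kk Dk; apply/eqP; apply: contra_notT nD2 => k1; apply: (@Delta_natMKl _ 3).
  apply: (rg_unit_nat_of_coef (k := k) (p := 2%:R + elt k) (rg_unit1B Dk)).
    by rewrite sqr_factor gr_eltM kk gr_elt1 subrr addr0.
  by rewrite gr_coefD gr_coef_nat gr_eltE (negPf k1) eqxx add0r.
exact: Delta6_coef.
Qed.

Lemma cube_trivial k : ~ Delta_ring (3%:R : R) -> (k * (k * k) = 1)%g ->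
  Delta_ring (elt k - 1) -> k = 1%g.
Proof.
move=> nD3 kkk Dk; apply/eqP; apply: contra_notT nD3 => k1; apply: (@Delta_natMKl _ 2).
  have Ukk := rg_unit1D (Delta_unitMl (rg_unit_gr_elt k) Dk).
  apply: (rg_unit_nat_of_coef (k := k) (p := 1 + elt k) Ukk).
    by rewrite cube_factor !gr_eltM kkk gr_elt1 subrr addr0.
  by rewrite gr_coefD gr_coef1 gr_eltE (negPf k1) eqxx add0r.
exact: Delta6_coef.
Qed.

(* [N = \sum_(i < n) h^i] kills [h - 1], and [N = n + \sum_i (h^i - 1)] is a unit. *)
Lemma coprime6_trivial h n : coprime n 6 -> (h ^+ n = 1)%g ->
  Delta_ring (elt h - 1) -> h = 1%g.
Proof.
move=> co6 hn Dh; pose N := \sum_(0 <= i < n) elt (h ^+ i)%g.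
have NhK : N * (elt h - 1) = 0.
  rewrite /N mulr_suml.
  under eq_bigr => i _ do rewrite mulrBr mulr1 gr_eltM -expgSr.
  by rewrite telescope_sumr // hn expg0 gr_elt1 subrr.
have [v [_ vN]] : rg_unit N.
  have -> : N = n%:R + \sum_(0 <= i < n) (elt (h ^+ i)%g - 1).
    by rewrite sumrB sumr_const_nat subn0 addrC subrK.
  apply: (coprime6_rg_unit D6 co6); apply: Delta_sum => i.
  exact: Delta_elt_expg.
have : v * N * (elt h - 1) = 0 by rewrite -mulrA NhK mulr0.
by rewrite vN mul1r => /eqP; rewrite subr_eq0 -gr_elt1 => /eqP/gr_elt_inj.
Qed.

(* Strong induction on [n]: when [p = 2] or [3] divides [n], the element
   [h ^+ (n %/ p)] has order dividing [p], hence is trivial. *)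
Lemma torsion_trivial h n : ~ Delta_ring (2%:R : R) -> ~ Delta_ring (3%:R : R) ->
  Delta_ring (elt h - 1) -> (0 < n)%N -> (h ^+ n = 1)%g -> h = 1%g.
Proof.
move=> nD2 nD3 Dh; have Dpow := Delta_elt_expg Dh.
elim/ltn_ind: n => n IHn n_gt0 hn.
have [d2|nd2] := boolP (2 %| n)%N.
  apply: (IHn (n %/ 2)%N); first by rewrite ltn_Pdiv.
    by rewrite divn_gt0 // dvdn_leq.
  by apply: involution_trivial nD2 _ (Dpow _); rewrite -expgnDr addnn -muln2 divnK.
have [d3|nd3] := boolP (3 %| n)%N.
  apply: (IHn (n %/ 3)%N); first by rewrite ltn_Pdiv.
    by rewrite divn_gt0 // dvdn_leq.
  apply: cube_trivial nD3 _ (Dpow _).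
  rewrite -!expgnDr -hn; set q := (n %/ 3)%N.
  by rewrite -(divnK d3) -/q mulnC !mulSn mul0n addn0.
apply: coprime6_trivial _ hn Dh.
by rewrite -[6%N]/(2 * 3)%N coprimeMr ![coprime n _]coprime_sym !prime_coprime ?nd2.
Qed.

Lemma inverse_2_sub_elt_coef h z : (2%:R - elt h) * z = 1 ->
  forall g, 2%:R * z g - z (h^-1 * g)%g = (g == 1%g)%:R.
Proof.
move=> hz g; rewrite -gr_coef1 -hz mulrBl gr_coefB gr_coef_eltM.
by rewrite -gr_const_nat gr_coef_constM.
Qed.

(* The inverse [z] of [2 - h] satisfies [z (h^j) = 2 z (h^(j+1))] and
   [z (h^-(j+1)) = - 2^j]; finiteness of its support then forces [2] to be
   nilpotent unless [h] is a torsion element. *)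
Lemma Delta_elt_sub1_torsion h : ~ Delta_ring (2%:R : R) ->
  Delta_ring (elt h - 1) -> exists2 n, (0 < n)%N & (h ^+ n = 1)%g.
Proof.
move=> nD2 Dh; apply: NNPP => h_aper.
have h_ne1 n : (0 < n)%N -> (h ^+ n)%g != 1%g.
  by move=> n_gt0; apply/eqP => hn; apply: h_aper; exists n.
have hV_ne1 n : (0 < n)%N -> ((h^-1) ^+ n)%g != 1%g.
  by move=> n_gt0; rewrite expVgn invg_eq1; apply: h_ne1.
have [z [hz _]] := rg_unit1B Dh; rewrite opprB addrA -mulr2n in hz.
have zE := inverse_2_sub_elt_coef hz.
have z_pos j : z (h ^+ j)%g = 2%:R * z (h ^+ j.+1)%g.
  have /eqP := zE (h ^+ j.+1)%g; rewrite (negPf (h_ne1 _ (ltn0Sn j))) subr_eq0.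
  by rewrite expgS mulKg => /eqP.
have z1 : z 1%g = 0.
  have [J _ hJ] := exists_notin_fset (finsupp z) (expg_inj h_ne1).
  have zJ j : z 1%g = 2%:R ^+ j * z (h ^+ j)%g.
    by elim: j => [|j IHj]; rewrite ?expg0 ?mul1r // IHj z_pos exprSr mulrA.
  by rewrite (zJ J) fsfun_dflt ?mulr0.
have z_neg j : z ((h^-1) ^+ j.+1)%g = - 2%:R ^+ j.
  elim: j => [|j IHj].
    have /eqP := zE 1%g; rewrite z1 mulr0 sub0r mulg1 eqxx eqr_oppLR.
    by rewrite expg1 => /eqP.
  have /eqP := zE ((h^-1) ^+ j.+1)%g; rewrite (negPf (hV_ne1 _ (ltn0Sn j))) subr_eq0.
  by rewrite -expgS IHj => /eqP <-; rewrite exprS mulrN.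
have [J J_gt0 hJ] := exists_notin_fset (finsupp z) (expg_inj hV_ne1).
apply: nD2; apply: (@nilpotent2_Delta _ J.-1); apply/eqP; rewrite -oppr_eq0.
by rewrite -z_neg prednK // fsfun_dflt.
Qed.

End TorsionUnits.

Theorem theorem3p9 (R : nzRingType) (G : groupType) :
  grpring_is_DT R G ->
  ~ Delta_ring (2%:R : R) ->
  ~ Delta_ring (3%:R : R) ->
  forall g : G, (g * g = 1)%g.
Proof.
move=> DT nD2 nD3 g.
have D6 : Delta_ring (6%:R : grpring R G) := DT_Delta6 DT.
have Dg2 : Delta_ring (gr_elt (g * g)%g - 1 : grpring R G).
  by rewrite -gr_eltM; apply: DT_unit_sqr DT (rg_unit_gr_elt g).
have [n n_gt0 g2n] := Delta_elt_sub1_torsion nD2 Dg2.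
exact: (torsion_trivial D6 nD2 nD3 Dg2 n_gt0 g2n).
Qed.
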